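(* Let $H$ be a separable infinite-dimensional complex Hilbert space and $T\in\mathcal{L}(H)$. If any of the following conditions holds, then $T$ is not universal: (i) the interior of the point spectrum $\sigma_p(T;H)$ is empty; (ii) the interior of the essential spectrum $\sigma_e(T;H)$ is empty; (iii) every non-zero eigenvalue $\alpha\in\sigma_p(T;H)$ has finite multiplicity.
   Context: $\mathcal{L}(H)$ denotes the bounded linear operators on $H$. Operators $T_1\in\mathcal{L}(H_1)$, $T_2\in\mathcal{L}(H_2)$ are similar if there is a linear isomorphism $J:H_1\to H_2$ with $T_1=J^{-1}T_2J$. An operator $U\in\mathcal{L}(H)$ is universal if for every $T\in\mathcal{L}(H)$ there exist a closed subspace $M\subset H$ with $U(M)\subset M$ and a constant $c\neq0$ such that $U|_M:M\to M$ and $cT:H\to H$ are similar. $\sigma_p(T;H)$ is the point spectrum and $\sigma_e(T;H)=\{\lambda: T-\lambda I\text{ is not Fredholm}\}$ the essential spectrum. *)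

(* Complex scalars are  R[i]  (mathcomp-real-closed
   `complex`) over an arbitrary  R : realType;  a complex Hilbert space is a
   complete normed R[i]-module whose norm comes from an inner product. *)
From HB Require Import structures.
From mathcomp Require Import all_boot all_order all_algebra.
From mathcomp Require Import all_classical all_reals all_analysis.
From mathcomp Require Export complex.
Import Order.TTheory GRing.Theory Num.Theory.
Import numFieldNormedType.Exports.

Set Implicit Arguments.
Unset Strict Implicit.
Unset Printing Implicit Defensive.

Local Open Scope ring_scope.
Local Open Scope classical_set_scope.

Section HilbertDefs.
Context {R : realType} {V : completeNormedModType R[i]}.

Definition is_inner_product (ip : V -> V -> R[i]) : Prop :=
  [/\ (forall x y z, ip (x + y) z = ip x z + ip y z),
      (forall (a : R[i]) x y, ip (a *: x) y = a * ip x y),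
      (forall x y, ip y x = (ip x y)^*) &
      (forall x, ip x x = `|x| ^+ 2)].

Definition hilbert_space : Prop := exists ip, is_inner_product ip.

Definition separable : Prop := exists u : nat -> V, closure (range u) = setT.

Definition finite_dim_set (A : set V) : Prop :=
  exists n (e : 'I_n -> V), forall x, A x ->
    exists c : 'I_n -> R[i], x = \sum_(i < n) c i *: e i.

Definition infinite_dimensional : Prop := ~ finite_dim_set setT.

Definition closed_subspace (M : set V) : Prop :=
  [/\ closed M, M 0,
      (forall x y, M x -> M y -> M (x + y)) &
      (forall (a : R[i]) x, M x -> M (a *: x))].

Definition point_spectrum (T : V -> V) : set R[i] :=
  [set l | exists x : V, x != 0 /\ T x = l *: x].

Definition fredholm (S : V -> V) : Prop :=
  [/\ closed (range S),
      finite_dim_set [set x | S x = 0] &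
      exists n (e : 'I_n -> V), forall y, exists x (c : 'I_n -> R[i]),
        y = S x + \sum_(i < n) c i *: e i].

Definition essential_spectrum (T : V -> V) : set R[i] :=
  [set l | ~ fredholm (fun x => T x - l *: x)].

Definition cinterior (A : set R[i]) : set R[i] := @interior R[i]^o A.

(* U restricted to M (a closed invariant subspace) is similar to c T:
   there is a bounded linear bijection J : M -> V with bounded inverse K
   such that U|_M = J^{-1} (c T) J. *)
Definition similar_restriction (U : V -> V) (M : set V) (c : R[i]) (T : V -> V)
  : Prop :=
  exists J K : V -> V,
    (forall x y, M x -> M y -> J (x + y) = J x + J y) /\
    (forall (a : R[i]) x, M x -> J (a *: x) = a *: J x) /\
    {within M, continuous J} /\
    continuous K /\
    (forall y, M (K y)) /\
    (forall x, M x -> K (J x) = x) /\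
    (forall y, J (K y) = y) /\
    (forall x, M x -> U x = K (c *: T (J x))).

Definition universal (U : V -> V) : Prop :=
  forall T : {linear V -> V}, continuous T ->
    exists (M : set V) (c : R[i]),
      [/\ closed_subspace M, (forall x, M x -> M (U x)), c != 0 &
          similar_restriction U M c T].

End HilbertDefs.

(* Suppose T were universal.  Gram-Schmidt gives an orthonormal sequence (e_n), and S x = sum_m <x, e_(2m+1)> e_m is a
   contraction, the adjoint of the isometry e_m |-> e_(2m+1).  With
   sigma m = 2m+1, the sigma-orbits of the even numbers partition nat and S
   moves each orbit back by one step, so for |lam| < 1 the vectors
   v_k = sum_j lam^j e_(sigma^j k), k even, are linearly independent
   eigenvectors of S for lam.  Universality yields c <> 0 and an injective
   linear K with T K = K (c S), so every mu with |mu| < |c| is an eigenvalue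
   of T of infinite multiplicity.  The open disc of radius |c| thus lies in the
   point spectrum and in the essential spectrum (T - mu has an
   infinite-dimensional kernel), and c/2 is a nonzero eigenvalue of infinite
   multiplicity: each of (i)-(iii) fails. *)

From HB Require Import structures.
From mathcomp Require Import all_boot all_order all_algebra.
From mathcomp Require Import all_classical all_reals all_analysis.
From mathcomp Require Import complex.
From mathcomp Require Import ring.
Import Order.TTheory GRing.Theory Num.Theory.
Import numFieldNormedType.Exports.
Local Open Scope ring_scope.
Local Open Scope classical_set_scope.

Lemma geometric_sum_le {F : numFieldType} (r : F) N : 0 <= r -> r < 1 ->
  \sum_(0 <= j < N) r ^+ j <= (1 - r)^-1.
Proof.
move=> r0 r1.
have telescope : \sum_(0 <= j < N) r ^+ j * (1 - r) = 1 - r ^+ N.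
  elim: N => [|N IH]; first by rewrite big_geq // expr0 subrr.
  by rewrite big_nat_recr //= IH exprSr; ring.
rewrite -[X in _ <= X]mul1r ler_pdivlMr ?subr_gt0 // big_distrl /= telescope.
by rewrite lerBlDr lerDl exprn_ge0.
Qed.

Lemma bounded_nneg_series_tail {R : realType} {c : nat -> R[i]} {B : R[i]} :
  (forall k, 0 <= c k) -> (forall N, \sum_(0 <= k < N) c k <= B) ->
  forall eps : R[i], 0 < eps ->
  \forall n \near (\oo, \oo), \sum_(n.1 <= k < n.2) c k < eps.
Proof.
move=> c0 cB eps eps0.
pose d k := complex.Re (c k).
have cd k : c k = (d k)%:C%C by rewrite /d RRe_real // ger0_real.
have d0 k : 0 <= d k by rewrite -ler0c -cd.
have sd p q : \sum_(p <= k < q) c k = (\sum_(p <= k < q) d k)%:C%C.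
  by rewrite rmorph_sum; apply: eq_bigr => k _; rewrite cd.
have : cvgn (series d).
  apply: nondecreasing_is_cvgn; first by apply: nondecreasing_series => n _ _.
  exists (complex.Re B) => _ [n _ <-]; rewrite /series /=.
  have B0 : 0 <= B by apply: le_trans (cB 0%N); rewrite big_geq.
  by rewrite -lecR RRe_real ?ger0_real // -sd.
move=> /cvg_cauchy /cauchy_seriesP /(_ (complex.Re eps)).
rewrite -ltcR RRe_real ?gtr0_real // => /(_ eps0); apply: filterS => n.
rewrite sd -(RRe_real (gtr0_real eps0)) ltcR.
by apply: le_lt_trans; exact: ler_norm.
Qed.

Lemma norm_lim_le {K : numFieldType} {V : normedModType K}
    {s : nat -> V} {l : V} {B : K} :
  0 <= B -> s @ \oo --> l -> (forall n, `|s n| <= B) -> `|l| <= B.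
Proof.
move=> B0 sl sB; rewrite real_leNgt ?ger0_real //; apply/negP => Bl.
have gap : 0 < `|l| - B by rewrite subr_gt0.
have [n hn] := filter_ex ((cvgrPdist_lt _ _).1 sl _ gap).
have := le_lt_trans (ler_normD (l - s n) (s n)) (ltr_leD hn (sB n)).
by rewrite !subrK ltxx.
Qed.

Section LinearIndependence.
Context {K : nzRingType}.

Definition linearly_independent {V : lmodType K} (w : nat -> V) :=
  forall n (d : 'I_n -> K), \sum_(i < n) d i *: w i = 0 -> forall i, d i = 0.

Lemma independent_comp_injective {V W : lmodType K} (f : {linear V -> W})
    (w : nat -> V) :
  (forall y, f y = 0 -> y = 0) -> linearly_independent w ->
  linearly_independent (fun i => f (w i)).
Proof.
move=> f_inj indep n d comb0; apply: indep; apply: f_inj.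
by rewrite linear_sum; under eq_bigr do rewrite linearZ.
Qed.

End LinearIndependence.

Section InfiniteMultiplicity.
Context {R : realType} {V : completeNormedModType R[i]}.

Lemma independent_not_finite_dim (E : set V) (w : nat -> V) :
  (forall i, E (w i)) -> linearly_independent w -> ~ finite_dim_set E.
Proof.
move=> Ew indep [n [f f_span]].
have /choice [C wC] : forall i : 'I_n.+1, exists c : 'I_n -> R[i],
  w i = \sum_(j < n) c j *: f j by move=> i; exact: f_span.
pose A : 'M[R[i]]_(n.+1, n) := \matrix_(i, j) C i j.
have ker_neq0 : kermx A != 0.
  by rewrite -mxrank_eq0 mxrank_ker subn_eq0 -ltnNge ltnS rank_leq_col.
have /existsP [r r_neq0] : [exists r, row r (kermx A) != 0].
  apply: contraNT ker_neq0 => /existsPn ker0; apply/eqP/row_matrixP => r.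
  by rewrite row0; apply/eqP/negPn/ker0.
set d := row r (kermx A).
have dA : d *m A = 0 by rewrite /d -row_mul mulmx_ker row0.
have comb0 : \sum_(i < n.+1) d 0 i *: w i = 0.
  under eq_bigr do rewrite wC scaler_sumr.
  rewrite exchange_big /=; apply: big1 => j _.
  under eq_bigr do rewrite scalerA.
  have : (d *m A) 0 j = \sum_i d 0 i * C i j.
    by rewrite !mxE; apply: eq_bigr => i _; rewrite !mxE.
  by rewrite dA mxE -scaler_suml => <-; rewrite scale0r.
move/eqP: r_neq0; apply; apply/matrixP => i j; rewrite [RHS]mxE (ord1 i).
exact: indep comb0 j.
Qed.

Definition infinite_multiplicity (T : V -> V) (lam : R[i]) :=
  exists w, linearly_independent w /\ forall i, T (w i) = lam *: w i.

Section Eigenfamily.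
Context {T : V -> V} {lam : R[i]} (Tlam : infinite_multiplicity T lam).

Lemma infinite_multiplicity_eigenspace :
  ~ finite_dim_set [set x | T x = lam *: x].
Proof. by have [w [indep Tw]] := Tlam; exact: independent_not_finite_dim indep. Qed.

Lemma infinite_multiplicity_point_spectrum : point_spectrum T lam.
Proof.
have [w [indep Tw]] := Tlam; exists (w 0%N); split => //.
apply/eqP => w0; have := indep 1%N (fun _ => 1) _ ord0.
by rewrite big_ord1 w0 scaler0 => /(_ erefl)/eqP; rewrite oner_eq0.
Qed.

Lemma infinite_multiplicity_essential_spectrum : essential_spectrum T lam.
Proof.
move=> [_ ker_fd _]; apply: infinite_multiplicity_eigenspace.
have -> : [set x | T x = lam *: x] = [set x | T x - lam *: x = 0].
  by apply/seteqP; split=> x /=; [move=> ->; rewrite subrr | move/subr0_eq].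
exact: ker_fd.
Qed.

End Eigenfamily.

End InfiniteMultiplicity.

Section InnerProduct.
Context {R : realType} {V : completeNormedModType R[i]}.
Variable ip : V -> V -> R[i].
Hypothesis Hip : is_inner_product ip.

Lemma ipDl x y z : ip (x + y) z = ip x z + ip y z. Proof. by case: Hip. Qed.
Lemma ipZl a x y : ip (a *: x) y = a * ip x y. Proof. by case: Hip. Qed.
Lemma ipC x y : ip y x = (ip x y)^*. Proof. by case: Hip. Qed.
Lemma ipxx x : ip x x = `|x| ^+ 2. Proof. by case: Hip. Qed.

Lemma ipDr x y z : ip x (y + z) = ip x y + ip x z.
Proof. by rewrite ipC ipDl rmorphD /= -!ipC. Qed.
Lemma ipZr a x y : ip x (a *: y) = a^* * ip x y.
Proof. by rewrite ipC ipZl rmorphM /= -ipC. Qed.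
Lemma ipNl x y : ip (- x) y = - ip x y.
Proof. by rewrite -scaleN1r ipZl mulN1r. Qed.
Lemma ipNr x y : ip x (- y) = - ip x y.
Proof. by rewrite -scaleN1r ipZr rmorphN1 mulN1r. Qed.
Lemma ipBl x y z : ip (x - y) z = ip x z - ip y z.
Proof. by rewrite ipDl ipNl. Qed.
Lemma ipBr x y z : ip x (y - z) = ip x y - ip x z.
Proof. by rewrite ipDr ipNr. Qed.
Lemma ip0l y : ip 0 y = 0.
Proof. by rewrite -(scale0r (0 : V)) ipZl mul0r. Qed.
Lemma ip0r x : ip x 0 = 0.
Proof. by rewrite ipC ip0l rmorph0. Qed.

Lemma ip_suml I (r : seq I) (P : pred I) (F : I -> V) y :
  ip (\sum_(i <- r | P i) F i) y = \sum_(i <- r | P i) ip (F i) y.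
Proof. by apply: (big_morph (ip^~ y)) => [a b|]; [exact: ipDl | exact: ip0l]. Qed.
Lemma ip_sumr I (r : seq I) (P : pred I) (F : I -> V) x :
  ip x (\sum_(i <- r | P i) F i) = \sum_(i <- r | P i) ip x (F i).
Proof. by apply: (big_morph (ip x)) => [a b|]; [exact: ipDr | exact: ip0r]. Qed.

Lemma ipxx_eq0 x : ip x x = 0 -> x = 0.
Proof. by rewrite ipxx => /eqP; rewrite expf_eq0 /= normr_eq0 => /eqP. Qed.

Lemma ip_polar x y : 4%:R * ip x y =
  `|x + y| ^+ 2 - `|x - y| ^+ 2 + 'i * `|x + 'i *: y| ^+ 2 - 'i * `|x - 'i *: y| ^+ 2.
Proof.
rewrite -!ipxx !(ipDl, ipDr, ipNl, ipNr, ipZl, ipZr) conjCi.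
have i2 : 'i * 'i = -1 :> R[i] by rewrite -expr2 sqrCi.
by ring: i2.
Qed.

Lemma continuous_ipl y : continuous (fun x => ip x y : R[i]^o).
Proof.
have -> : (fun x => ip x y) = fun x => 4%:R^-1 * (`|x + y| ^+ 2 - `|x - y| ^+ 2
    + 'i * `|x + 'i *: y| ^+ 2 - 'i * `|x - 'i *: y| ^+ 2).
  by apply/funext => x; rewrite -ip_polar mulKf ?pnatr_eq0.
have normDX2 (z : V) : continuous (fun x : V => `|x + z| ^+ 2 : R[i]^o).
  move=> x; rewrite /continuous_at expr2; under eq_fun do rewrite expr2.
  by apply: cvgM; apply: cvg_norm; apply: cvgD => //; exact: cvg_cst.
move=> x; apply: cvgMl_tmp.
by apply: cvgB; [apply: cvgD; [apply: cvgB|apply: cvgMl_tmp]|apply: cvgMl_tmp];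
  exact: normDX2.
Qed.

Lemma cvg_ipl_near {s : nat -> V} {l y : V} {c : R[i]} : s @ \oo --> l ->
  (\forall n \near \oo, ip (s n) y = c) -> ip l y = c.
Proof.
move=> sl sc.
have ipl : (fun n => ip (s n) y : R[i]^o) @ \oo --> (ip l y : R[i]^o).
  exact: continuous_cvg _ (@continuous_ipl y l) sl.
have ipc : (fun n => ip (s n) y : R[i]^o) @ \oo --> (c : R[i]^o) by exact: cvg_near_cst.
exact: (cvg_unique _ ipl ipc).
Qed.

Lemma biorthogonal_independent {w f : nat -> V} :
  (forall i j, ip (w i) (f j) = (i == j)%:R) -> linearly_independent w.
Proof.
move=> wf n d comb0 j; have := congr1 (ip^~ (f j)) comb0.
rewrite /= ip_suml ip0l (bigD1 j) //= ipZl wf eqxx mulr1 big1 ?addr0 // => i ij.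
by rewrite ipZl wf val_eqE (negbTE ij) mulr0.
Qed.

Definition orthonormal (e : nat -> V) := forall m n, ip (e m) (e n) = (m == n)%:R.

Definition orthonormal_seq (s : seq V) :=
  uniq s /\ {in s &, forall u v, ip u v = (u == v)%:R}.

Lemma exists_unit_orthogonal (s : seq V) : @infinite_dimensional R V ->
  orthonormal_seq s -> exists u, {in s, forall v, ip u v = 0} /\ ip u u = 1.
Proof.
move=> Hinf [s_uniq s_on].
have [x x_span] : exists x : V, ~ exists c : 'I_(size s) -> R[i],
    x = \sum_(i < size s) c i *: s`_i.
  apply/existsNP => span; apply: Hinf.
  by exists (size s), (fun i => s`_i) => x _; exact: span.
set w := x - \sum_(u <- s) ip x u *: u.
have w_perp : {in s, forall v, ip w v = 0}.
  move=> v vs; rewrite ipBl ip_suml (bigD1_seq v) //= ipZl (s_on v v) // eqxx mulr1.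
  rewrite big1_seq ?addr0 ?subrr // => u /andP[uv us].
  by rewrite ipZl (s_on u v) // (negbTE uv) mulr0.
have w_neq0 : `|w| != 0.
  rewrite normr_eq0; apply/eqP => w0; apply: x_span; exists (fun i => ip x s`_i).
  by apply/eqP; rewrite -subr_eq0 -(big_mkord xpredT (fun i => ip x s`_i *: s`_i))
    -(big_nth 0 xpredT (fun u => ip x u *: u)) -/w w0.
exists (`|w|^-1 *: w); split; first by move=> v vs; rewrite ipZl w_perp ?mulr0.
rewrite ipZl ipZr ipxx fmorphV /= (geC0_conj (normr_ge0 w)).
by field.
Qed.

Fixpoint history (F : seq V -> V) (n : nat) : seq V :=
  if n is n'.+1 then F (history F n') :: history F n' else [::].

Lemma exists_orthonormal : @infinite_dimensional R V -> exists e, orthonormal e.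
Proof.
move=> Hinf.
have /choice [F F_spec] : forall s : seq V, exists u, orthonormal_seq s ->
    {in s, forall v, ip u v = 0} /\ ip u u = 1.
  move=> s; have [s_on | s_not] := pselect (orthonormal_seq s).
    by have [u hu] := exists_unit_orthogonal s Hinf s_on; exists u.
  by exists 0 => /s_not.
have history_on n : orthonormal_seq (history F n).
  elim: n => [|n IH]; first by split => // u v.
  have [[s_uniq s_on] [perp one]] := (IH, F_spec _ IH).
  have F_notin : F (history F n) \notin history F n.
    by apply/negP => /perp; rewrite one => /eqP; rewrite oner_eq0.
  split; first by rewrite /= F_notin.
  move=> u v; rewrite !inE => /predU1P[-> | us] /predU1P[-> | vs].
  - by rewrite one eqxx.
  - by rewrite perp //; case: eqP vs F_notin => // <- ->.
  - by rewrite ipC perp // conjC0; case: eqP us F_notin => // -> ->.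
  - exact: s_on.
have history_mem m n : (m < n)%N -> F (history F m) \in history F n.
  elim: n => // n IH; rewrite ltnS leq_eqVlt inE => /predU1P[-> | /IH ->].
    by rewrite eqxx.
  by rewrite orbT.
exists (fun n => F (history F n)).
suff ortho_le m n : (m <= n)%N -> ip (F (history F m)) (F (history F n)) = (m == n)%:R.
  move=> m n; case: (leqP m n) => [/ortho_le // | /ltnW /ortho_le nm].
  by rewrite ipC nm conjC_nat eq_sym.
have [perp one] := F_spec _ (history_on n).
rewrite leq_eqVlt => /predU1P[-> | mn]; first by rewrite one eqxx.
by rewrite ipC perp ?history_mem // conjC0 (ltn_eqF mn).
Qed.

Lemma orthonormal_comp {e : nat -> V} {g : nat -> nat} :
  orthonormal e -> injective g -> orthonormal (fun n => e (g n)).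
Proof. by move=> He g_inj m n; rewrite He inj_eq. Qed.

Lemma series_e_perp {e : nat -> V} {a : nat -> R[i]} {g : nat -> nat} {u w : V} :
  series (fun j => a j *: e (g j)) @ \oo --> u ->
  (forall m, ip w (e m) = 0) -> ip u w = 0.
Proof.
move=> su w_perp; apply: (cvg_ipl_near su); apply: nearW => n.
by rewrite ip_suml big1 // => j _; rewrite ipZl ipC w_perp conjC0 mulr0.
Qed.

Section Orthonormal.
Context {e : nat -> V} (He : orthonormal e).

Lemma ip_sum_e (a : nat -> R[i]) p q m :
  ip (\sum_(p <= k < q) a k *: e k) (e m) = if (p <= m < q)%N then a m else 0.
Proof.
rewrite ip_suml; under eq_bigr do rewrite ipZl He.
case: ifP => mpq.
  rewrite (bigD1_seq m) ?mem_index_iota ?iota_uniq //= eqxx mulr1 big1 ?addr0 //.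
  by move=> k /negbTE ->; rewrite mulr0.
rewrite big_seq big1 // => k; rewrite mem_index_iota => kpq.
by case: eqP kpq mpq => [-> -> //|_ _ _]; rewrite mulr0.
Qed.

Lemma pythagoras (a : nat -> R[i]) p q :
  ip (\sum_(p <= k < q) a k *: e k) (\sum_(p <= k < q) a k *: e k)
  = \sum_(p <= k < q) a k * (a k)^*.
Proof.
rewrite ip_sumr; apply: eq_big_seq => k; rewrite mem_index_iota => kpq.
by rewrite ipZr ip_sum_e kpq mulrC.
Qed.

Lemma bessel x N : \sum_(0 <= k < N) ip x (e k) * (ip x (e k))^* <= ip x x.
Proof.
set s := \sum_(0 <= k < N) ip x (e k) *: e k.
have sx : ip s x = \sum_(0 <= k < N) ip x (e k) * (ip x (e k))^*.
  by rewrite ip_suml; apply: eq_bigr => k _; rewrite ipZl -ipC.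
have xs : ip x s = \sum_(0 <= k < N) ip x (e k) * (ip x (e k))^*.
  by rewrite ip_sumr; apply: eq_bigr => k _; rewrite ipZr mulrC.
have : 0 <= ip (x - s) (x - s) by rewrite ipxx exprn_ge0.
by rewrite ipBl !ipBr sx xs pythagoras subrr subr0 subr_ge0.
Qed.

Lemma cvg_series_orthonormal {a : nat -> R[i]} {B : R[i]} :
  (forall N, \sum_(0 <= k < N) a k * (a k)^* <= B) ->
  cvgn (series (fun k => a k *: e k)).
Proof.
move=> aB; apply: cauchy_cvg; apply/cauchy_seriesP => eps eps0.
have aa0 k : 0 <= a k * (a k)^* by rewrite -normCK exprn_ge0.
apply: filterS (bounded_nneg_series_tail aa0 aB _ (exprn_gt0 2 eps0)) => n tail.
by rewrite -(ltr_pXn2r (n := 2)) ?nnegrE ?normr_ge0 ?(ltW eps0) // -ipxx pythagoras.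
Qed.

End Orthonormal.

Section BackwardShift.
Context {e : nat -> V} (He : orthonormal e).

Definition sigma (m : nat) := m.*2.+1.

Lemma sigma_inj : injective sigma.
Proof. by move=> m n [] /double_inj. Qed.

Definition backshift_series x := series (fun m => ip x (e (sigma m)) *: e m).
Definition backshift x := lim (backshift_series x @ \oo).

Lemma backshift_cvg x : backshift_series x @ \oo --> backshift x.
Proof. exact: cvg_series_orthonormal _ (bessel (orthonormal_comp He sigma_inj) x). Qed.

Lemma backshift_linear : linear backshift.
Proof.
move=> a u v; rewrite [LHS]/backshift; apply: cvg_lim => //.
have -> : backshift_series (a *: u + v) =
    fun n => a *: backshift_series u n + backshift_series v n.
  apply/funext => n; rewrite /backshift_series /series /= scaler_sumr -big_split /=.
  by apply: eq_bigr => k _; rewrite ipDl ipZl scalerDl scalerA.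
apply: cvgD; last exact: backshift_cvg.
by apply: cvgZ; [exact: cvg_cst | exact: backshift_cvg].
Qed.

Lemma backshift_norm_le x : `|backshift x| <= `|x|.
Proof.
apply: (norm_lim_le (normr_ge0 x) (backshift_cvg x)) => n.
rewrite -(ler_pXn2r (n := 2)) ?nnegrE ?normr_ge0 // -!ipxx pythagoras //.
exact: bessel (orthonormal_comp He sigma_inj) x n.
Qed.

Lemma ip_backshift_e x m : ip (backshift x) (e m) = ip x (e (sigma m)).
Proof.
apply: (cvg_ipl_near (backshift_cvg x)); exists m.+1 => // n /= mn.
by rewrite ip_sum_e // leq0n mn.
Qed.

Definition backshiftL : {linear V -> V} :=
  HB.pack backshift (GRing.isLinear.Build R[i] V V *:%R backshift backshift_linear).

Lemma backshift_continuous : continuous backshiftL.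
Proof.
move=> x; apply/cvgrPdist_lt => eps eps0; near=> z.
rewrite -linearB; apply: le_lt_trans (backshift_norm_le _) _.
near: z; exact: cvgr_dist_lt.
Unshelve. all: by end_near.
Qed.

Section Eigenvectors.
Variable lam : R[i].
Hypothesis lam_lt1 : `|lam| < 1.

Lemma sigma_orbit_inj k : injective (fun j => iter j sigma k).
Proof.
have incr j : (iter j sigma k < iter j.+1 sigma k)%N.
  by rewrite iterS /sigma ltnS -addnn leq_addr.
exact: incn_inj (leq_mono (homo_ltn ltn_trans incr)).
Qed.

Definition eigvec_series k := series (fun j => lam ^+ j *: e (iter j sigma k)).
Definition eigvec k := lim (eigvec_series k @ \oo).

Lemma eigvec_cvg k : eigvec_series k @ \oo --> eigvec k.
Proof.
apply: (cvg_series_orthonormal (orthonormal_comp He (sigma_orbit_inj k))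
  (B := (1 - lam * lam^*)^-1)) => N.
under eq_bigr do rewrite rmorphXn -exprMn.
by apply: geometric_sum_le; rewrite -normCK ?exprn_ge0 ?expr_lt1.
Qed.

Lemma ip_eigvec_orbit k j : ip (eigvec k) (e (iter j sigma k)) = lam ^+ j.
Proof.
apply: (cvg_ipl_near (eigvec_cvg k)); exists j.+1 => // n /= jn.
by rewrite (ip_sum_e (orthonormal_comp He (sigma_orbit_inj k))) leq0n jn.
Qed.

Lemma ip_eigvec_off k m : (forall j, iter j sigma k != m) -> ip (eigvec k) (e m) = 0.
Proof.
move=> off; apply: (cvg_ipl_near (eigvec_cvg k)); apply: nearW => n.
by rewrite ip_suml big1 // => j _; rewrite ipZl He (negbTE (off j)) mulr0.
Qed.

Lemma backshift_eigvec k : ~~ odd k -> backshift (eigvec k) = lam *: eigvec k.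
Proof.
move=> k_even; set w := backshift (eigvec k) - lam *: eigvec k.
have w_perp m : ip w (e m) = 0.
  rewrite ipBl ipZl ip_backshift_e.
  have [[j <-]|off] := pselect (exists j, iter j sigma k = m).
    by rewrite -iterS !ip_eigvec_orbit exprS subrr.
  have off_m j : iter j sigma k != m by apply/eqP => jm; apply: off; exists j.
  have off_sm j : iter j sigma k != sigma m.
    case: j => [|j]; last by rewrite iterS (inj_eq sigma_inj).
    by apply/eqP => /= km; move: k_even; rewrite km /sigma /= odd_double.
  by rewrite !ip_eigvec_off // mulr0 subrr.
(* w is orthogonal to every e_m and is a limit of combinations of the e_m. *)
apply/eqP; rewrite -subr_eq0 -/w; apply/eqP/ipxx_eq0.
rewrite {1}/w ipBl ipZl (series_e_perp (backshift_cvg _)) //.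
by rewrite (series_e_perp (eigvec_cvg k)) // mulr0 subr0.
Qed.

Lemma ip_eigvec_double i j : ip (eigvec i.*2) (e j.*2) = (i == j)%:R.
Proof.
have [<-|ij] := eqVneq i j.
  by rewrite -[e i.*2]/(e (iter 0 sigma i.*2)) ip_eigvec_orbit expr0.
rewrite ip_eigvec_off // => -[|jj]; first by rewrite /= (inj_eq double_inj).
by apply/eqP => /(congr1 odd); rewrite iterS /sigma /= !odd_double.
Qed.

Lemma backshift_infinite_multiplicity : infinite_multiplicity backshiftL lam.
Proof.
exists (fun i => eigvec i.*2); split; last first.
  by move=> i; apply: backshift_eigvec; rewrite odd_double.
exact: (@biorthogonal_independent _ (fun j => e j.*2) ip_eigvec_double).
Qed.

End Eigenvectors.
End BackwardShift.
End InnerProduct.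

Section Universality.
Context {R : realType} {V : completeNormedModType R[i]}.

Lemma similar_restriction_intertwiner {U T : V -> V} {M : set V} {c : R[i]} :
  closed_subspace M -> similar_restriction U M c T ->
  exists K : {linear V -> V},
    (forall y, K y = 0 -> y = 0) /\ forall y, U (K y) = K (c *: T y).
Proof.
move=> [_ _ MD MZ] [J [K [JD [JZ [_ [_ [KM [KJ [JK UK]]]]]]]]].
have J_inj x1 x2 : M x1 -> M x2 -> J x1 = J x2 -> x1 = x2.
  by move=> M1 M2 J12; rewrite -(KJ _ M1) -(KJ _ M2) J12.
have K_linear : linear K.
  move=> a y z; have MaKy : M (a *: K y) by apply: MZ.
  apply: J_inj; [exact: KM | exact: MD MaKy (KM z) |].
  by rewrite JK JD // JZ // !JK.
pose KL : {linear V -> V} := HB.pack K (GRing.isLinear.Build R[i] V V *:%R K K_linear).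
have K0 : K 0 = 0 := linear0 KL.
exists KL; split => [y Ky0|y] /=; last by rewrite UK // JK.
by rewrite -(JK y) [K y]Ky0 -{1}K0 JK.
Qed.

Lemma intertwined_infinite_multiplicity {U T : V -> V} {K : {linear V -> V}}
    {c lam : R[i]} :
  (forall y, K y = 0 -> y = 0) -> (forall y, U (K y) = K (c *: T y)) ->
  infinite_multiplicity T lam -> infinite_multiplicity U (c * lam).
Proof.
move=> K_inj UK [w [indep Tw]]; exists (fun i => K (w i)); split.
  exact: independent_comp_injective.
by move=> i; rewrite UK Tw scalerA linearZ.
Qed.

Lemma cinterior_disc {A : set R[i]} {r : R[i]} :
  0 < r -> (forall mu, `|mu| < r -> A mu) -> cinterior A 0.
Proof.
move=> r0 disc; rewrite /cinterior /interior /=; apply/nbhs_ballP.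
by exists r => // mu; rewrite -ball_normE /= sub0r normrN; exact: disc.
Qed.

Lemma universal_disc_infinite_multiplicity {T : V -> V} :
  @hilbert_space R V -> @infinite_dimensional R V -> universal T ->
  exists2 r : R[i], 0 < r & forall mu, `|mu| < r -> infinite_multiplicity T mu.
Proof.
move=> [ip Hip] Hinf Huniv.
have [e He] := exists_orthonormal ip Hip Hinf.
have [M [c [M_sub _ c_neq0 T_sim]]] := Huniv _ (backshift_continuous ip Hip He).
have [K [K_inj TK]] := similar_restriction_intertwiner M_sub T_sim.
exists `|c|; first by rewrite normr_gt0.
move=> mu mu_lt; have -> : mu = c * (mu / c) by rewrite mulrC divfK.
apply: intertwined_infinite_multiplicity K_inj TK _.
apply: (backshift_infinite_multiplicity ip Hip He).
by rewrite normrM normfV ltr_pdivrMr ?normr_gt0 // mul1r.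
Qed.

End Universality.

Theorem corollary2p3 (R : realType) (V : completeNormedModType R[i]) :
  @hilbert_space R V -> @separable R V -> @infinite_dimensional R V ->
  forall T : {linear V -> V}, continuous T ->
  (cinterior (point_spectrum T) = set0 \/
   cinterior (essential_spectrum T) = set0 \/
   (forall a : R[i], a != 0 -> point_spectrum T a ->
      finite_dim_set [set x : V | T x = a *: x])) ->
  ~ universal T.
Proof.
move=> HV _ Hinf T _ Hcond Huniv.
have [r r_gt0 disc] := universal_disc_infinite_multiplicity HV Hinf Huniv.
case: Hcond => [pt0 | [ess0 | finite_mult]].
- have := cinterior_disc r_gt0
    (fun mu lt => infinite_multiplicity_point_spectrum (disc mu lt)).
  by rewrite pt0.
- have := cinterior_disc r_gt0
    (fun mu lt => infinite_multiplicity_essential_spectrum (disc mu lt)).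
  by rewrite ess0.
- have half_lt : `|r / 2%:R| < r.
    by rewrite normrM normfV normr_nat gtr0_norm // ltr_pdivrMr // ltr_pMr // ltr1n.
  have half_mult := disc _ half_lt.
  apply: (infinite_multiplicity_eigenspace half_mult).
  apply: finite_mult (infinite_multiplicity_point_spectrum half_mult).
  by rewrite mulf_neq0 ?gt_eqF // invr_eq0 pnatr_eq0.
Qed.
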